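(* Let $\{R_\alpha\}$ be a collection of $\star$-rings and let $R=\prod_\alpha R_\alpha$ with componentwise involution. Then $R$ is weakly $\star$-clean if and only if each $R_\alpha$ is weakly $\star$-clean and at most one $R_\alpha$ is not $\star$-clean.
   Context: Rings are associative with identity. A $\star$-ring is a ring with a map $\star$ satisfying $(x+y)^\star=x^\star+y^\star$, $(xy)^\star=y^\star x^\star$, $(x^\star)^\star=x$. A projection is $p$ with $p^2=p=p^\star$; $P(R)$ is the set of projections, $U(R)$ the units. $R$ is $\star$-clean if every element is $u+p$ with $u\in U(R)$, $p\in P(R)$. An element $x$ is weakly $\star$-clean if $x=u+p$ or $x=u-p$ with $u\in U(R)$, $p\in P(R)$; $R$ is weakly $\star$-clean if all its elements are. *)

From Stdlib Require Import FunctionalExtensionality.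

Set Implicit Arguments.

Record StarRing := {
  carrier :> Type;
  zero : carrier;
  one : carrier;
  add : carrier -> carrier -> carrier;
  opp : carrier -> carrier;
  mul : carrier -> carrier -> carrier;
  star : carrier -> carrier;
  addA : forall x y z, add x (add y z) = add (add x y) z;
  addC : forall x y, add x y = add y x;
  add0 : forall x, add zero x = x;
  addN : forall x, add (opp x) x = zero;
  mulA : forall x y z, mul x (mul y z) = mul (mul x y) z;
  mul1l : forall x, mul one x = x;
  mul1r : forall x, mul x one = x;
  mulDl : forall x y z, mul (add x y) z = add (mul x z) (mul y z);
  mulDr : forall x y z, mul x (add y z) = add (mul x y) (mul x z);
  starD : forall x y, star (add x y) = add (star x) (star y);
  starM : forall x y, star (mul x y) = mul (star y) (star x);
  starK : forall x, star (star x) = x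
}.

Arguments zero {s}. Arguments one {s}.
Arguments add {s}. Arguments opp {s}. Arguments mul {s}. Arguments star {s}.

Definition is_unit {R : StarRing} (u : R) : Prop :=
  exists v : R, mul u v = one /\ mul v u = one.

Definition is_proj {R : StarRing} (p : R) : Prop :=
  mul p p = p /\ star p = p.

Definition star_clean (R : StarRing) : Prop :=
  forall x : R, exists u p : R, is_unit u /\ is_proj p /\ x = add u p.

Definition weakly_star_clean_elt {R : StarRing} (x : R) : Prop :=
  exists u p : R, is_unit u /\ is_proj p /\ (x = add u p \/ x = add u (opp p)).

Definition weakly_star_clean (R : StarRing) : Prop :=
  forall x : R, weakly_star_clean_elt x.

Section Product.
Variable (I : Type) (R : I -> StarRing).

Let T := forall i, R i.
Let pzero : T := fun i => zero.
Let pone : T := fun i => one.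
Let padd (x y : T) : T := fun i => add (x i) (y i).
Let popp (x : T) : T := fun i => opp (x i).
Let pmul (x y : T) : T := fun i => mul (x i) (y i).
Let pstar (x : T) : T := fun i => star (x i).

Ltac fe := intros; apply functional_extensionality_dep; intro i.

Definition prod_star_ring : StarRing.
Proof.
refine (@Build_StarRing T pzero pone padd popp pmul pstar _ _ _ _ _ _ _ _ _ _ _ _);
  fe; unfold padd, popp, pmul, pstar, pzero, pone.
- apply addA. - apply addC. - apply add0. - apply addN. - apply mulA.
- apply mul1l. - apply mul1r. - apply mulDl. - apply mulDr.
- apply starD. - apply starM. - apply starK.
Defined.

End Product.

(* An element of the product is weakly *-clean exactly when a single sign
   works in every coordinate: x = u + p everywhere, or x = u - p everywhere.
   In a *-clean ring both signs always work, since -x = u + p gives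
   x = (-u) - p; in a ring that is not *-clean each sign fails at some
   element.  Two factors that are not *-clean therefore carry an element of
   the product for which both signs fail, while with at most one such factor
   the sign that works in that factor works everywhere. *)

From Stdlib Require Import Classical ClassicalEpsilon ChoiceFacts
  FunctionalExtensionality ProofIrrelevance.

Section RingFacts.
Context {R : StarRing}.
Implicit Types x y : R.

Lemma addr0 x : add x zero = x.
Proof. rewrite addC; apply add0. Qed.

Lemma addrN x : add x (opp x) = zero.
Proof. rewrite addC; apply addN. Qed.

Lemma addrI x y z : add x y = add x z -> y = z.
Proof.
intro E.
rewrite <- (add0 _ y), <- (add0 _ z), <- (addN _ x), <- !addA, E.
reflexivity.
Qed.

Lemma opprK x : opp (opp x) = x.
Proof. apply (addrI (opp x)). rewrite addrN, addN. reflexivity. Qed.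

Lemma opprD x y : opp (add x y) = add (opp x) (opp y).
Proof.
apply (addrI (add x y)).
rewrite addrN, (addC _ x y), <- addA, (addA _ x (opp x)), addrN, add0, addrN.
reflexivity.
Qed.

Lemma mul0r x : mul zero x = zero.
Proof. apply (addrI (mul zero x)). rewrite <- mulDl, add0, addr0. reflexivity. Qed.

Lemma mulr0 x : mul x zero = zero.
Proof. apply (addrI (mul x zero)). rewrite <- mulDr, add0, addr0. reflexivity. Qed.

Lemma mulNr x y : mul (opp x) y = opp (mul x y).
Proof.
apply (addrI (mul x y)). rewrite <- mulDl, !addrN, mul0r. reflexivity.
Qed.

Lemma mulrN x y : mul x (opp y) = opp (mul x y).
Proof.
apply (addrI (mul x y)). rewrite <- mulDr, !addrN, mulr0. reflexivity.
Qed.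

Lemma mulrNN x y : mul (opp x) (opp y) = mul x y.
Proof. rewrite mulNr, mulrN, opprK. reflexivity. Qed.

Lemma unitrN (u : R) : is_unit u -> is_unit (opp u).
Proof. intros [v [Huv Hvu]]. exists (opp v). rewrite !mulrNN. auto. Qed.

End RingFacts.

Definition signed_clean {R : StarRing} (s : bool) (x : R) : Prop :=
  exists u p : R, is_unit u /\ is_proj p /\ x = add u (if s then p else opp p).

Section SignedClean.
Context {R : StarRing}.
Implicit Types x : R.

Lemma weakly_star_clean_eltE x :
  weakly_star_clean_elt x <-> exists s, signed_clean s x.
Proof.
split.
- intros [u [p [Hu [Hp [E | E]]]]]; [exists true | exists false];
    exists u, p; auto.
- intros [[|] [u [p [Hu [Hp E]]]]]; exists u, p; auto.
Qed.

Lemma signed_clean_opp s x : signed_clean s x -> signed_clean (negb s) (opp x).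
Proof.
intros [u [p [Hu [Hp E]]]]. exists (opp u), p.
split; [apply unitrN; exact Hu | split; [exact Hp |]].
rewrite E, opprD. destruct s; simpl; [reflexivity | rewrite opprK; reflexivity].
Qed.

Lemma star_clean_signed s x : star_clean R -> signed_clean s x.
Proof.
intro Hc. destruct s.
- exact (Hc x).
- rewrite <- (opprK x). apply (signed_clean_opp true), Hc.
Qed.

Lemma not_star_clean_signed s :
  ~ star_clean R -> exists x, ~ signed_clean s x.
Proof.
intro Hnc. destruct (not_all_ex_not _ _ Hnc) as [x Hx].
destruct s.
- exists x. exact Hx.
- exists (opp x). intro Hs. apply Hx.
  rewrite <- (opprK x). exact (signed_clean_opp false _ Hs).
Qed.

End SignedClean.

Section Product.
Context {I : Type} {R : I -> StarRing}.
Notation P := (prod_star_ring R).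

Lemma prod_eqP (x y : P) : x = y <-> forall j, x j = y j.
Proof.
split.
- intros -> j. reflexivity.
- intro E. apply functional_extensionality_dep. exact E.
Qed.

Lemma prod_unitP (u : P) : is_unit u <-> forall j, is_unit (u j).
Proof.
split.
- intros [v [Huv Hvu]] j. exists (v j).
  split; [exact (proj1 (prod_eqP _ _) Huv j) | exact (proj1 (prod_eqP _ _) Hvu j)].
- intro Hu.
  destruct (non_dep_dep_functional_choice choice _
              (fun j v => mul (u j) v = one /\ mul v (u j) = one) Hu) as [v Hv].
  exists v. split; apply prod_eqP; intro j; apply (Hv j).
Qed.

Lemma prod_projP (p : P) : is_proj p <-> forall j, is_proj (p j).
Proof.
split.
- intros [Hpp Hsp] j.
  split; [exact (proj1 (prod_eqP _ _) Hpp j) | exact (proj1 (prod_eqP _ _) Hsp j)].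
- intro Hp. split; apply prod_eqP; intro j; apply (Hp j).
Qed.

Lemma prod_signed_cleanP s (x : P) :
  signed_clean s x <-> forall j, signed_clean s (x j).
Proof.
split.
- intros [u [p [Hu [Hp E]]]] j. exists (u j), (p j).
  split; [exact (proj1 (prod_unitP u) Hu j) |].
  split; [exact (proj1 (prod_projP p) Hp j) |].
  rewrite E. destruct s; reflexivity.
- intro Hx.
  destruct (non_dep_dep_functional_choice choice (fun j => (R j * R j)%type)
              (fun j up => is_unit (fst up) /\ is_proj (snd up) /\
                 x j = add (fst up) (if s then snd up else opp (snd up))))
    as [f Hf].
  { intro j. destruct (Hx j) as [u [p Hup]]. exists (u, p). exact Hup. }
  exists (fun j => fst (f j)), (fun j => snd (f j)).
  split; [apply prod_unitP; intro j; apply (Hf j) |].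
  split; [apply prod_projP; intro j; apply (Hf j) |].
  apply prod_eqP. intro j. rewrite (proj2 (proj2 (Hf j))). destruct s; reflexivity.
Qed.

Lemma prod_weakly_star_clean_eltP (x : P) :
  weakly_star_clean_elt x <-> exists s, forall j, signed_clean s (x j).
Proof.
rewrite weakly_star_clean_eltE.
split; intros [s Hs]; exists s; apply prod_signed_cleanP; exact Hs.
Qed.

Definition update (x : P) (a : I) (y : R a) : P :=
  fun j => match excluded_middle_informative (a = j) with
           | left e => eq_rect a R y j e
           | right _ => x j
           end.

Lemma update_at x a y : update x a y a = y.
Proof.
unfold update. destruct (excluded_middle_informative (a = a)) as [e | ne].
- rewrite (proof_irrelevance _ e eq_refl). reflexivity.
- contradiction.
Qed.

Lemma update_ne x a y j : a <> j -> update x a y j = x j.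
Proof.
intro ne. unfold update.
destruct (excluded_middle_informative (a = j)); [contradiction | reflexivity].
Qed.

End Product.

Theorem theorem4p11 (I : Type) (R : I -> StarRing) :
  weakly_star_clean (prod_star_ring R) <->
  ((forall a : I, weakly_star_clean (R a)) /\
   (forall a b : I, ~ star_clean (R a) -> ~ star_clean (R b) -> a = b)).
Proof.
split.
- intro Hw. split.
  + intros a x. apply weakly_star_clean_eltE.
    destruct (proj1 (prod_weakly_star_clean_eltP _) (Hw (update zero a x))) as [s Hs].
    exists s. rewrite <- (update_at zero a x). apply Hs.
  + intros a b Ha Hb. apply NNPP. intro ab.
    destruct (not_star_clean_signed true Ha) as [x Hx].
    destruct (not_star_clean_signed false Hb) as [y Hy].
    destruct (proj1 (prod_weakly_star_clean_eltP _)
                (Hw (update (update zero a x) b y))) as [[|] Hs].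
    * apply Hx. rewrite <- (update_at zero a x), <- (update_ne _ b y a (not_eq_sym ab)).
      apply Hs.
    * apply Hy. rewrite <- (update_at (update zero a x) b y). apply Hs.
- intros [Hw Hnc] x. apply prod_weakly_star_clean_eltP.
  destruct (classic (exists a, ~ star_clean (R a))) as [[a Ha] | Hall].
  + destruct (proj1 (weakly_star_clean_eltE _) (Hw a (x a))) as [s Hs].
    exists s. intro j. destruct (classic (star_clean (R j))) as [Hj | Hj].
    * apply star_clean_signed, Hj.
    * destruct (Hnc a j Ha Hj). exact Hs.
  + exists true. intro j. apply star_clean_signed.
    apply NNPP. intro Hj. apply Hall. exists j. exact Hj.
Qed.
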